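(* For every fixed $r \ge 1$, the function $$s \mapsto \theta_4(rs)\,\theta_4\!\left(\frac{r}{s}\right) - 2\,\theta_o(rs)\,\theta_o\!\left(\frac{r}{s}\right), \qquad s>0,$$ attains its maximum at $s = 1$.
   Context: For $s>0$, $\theta_4(s) = \sum_{k\in\mathbb{Z}} (-1)^k e^{-\pi k^2 s}$ and $\theta_o(s) = \sum_{k\in\mathbb{Z}} e^{-\pi (2k+1)^2 s}$. *)

From Stdlib Require Import Reals Lra Lia ZArith ClassicalEpsilon.
Open Scope R_scope.

Definition zpartial (f : Z -> R) (N : nat) : R :=
  sum_f_R0 (fun n => f (Z.of_nat n - Z.of_nat N)%Z) (2 * N).

(* The sum over k in Z, defined as the limit of the symmetric partial sums
   (the limit is unique; all families used here are absolutely summable,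
   so this agrees with the unordered sum). *)
Definition zsum (f : Z -> R) : R :=
  epsilon (inhabits 0) (fun l => Un_cv (zpartial f) l).

Definition theta4 (s : R) : R :=
  zsum (fun k => powerRZ (-1) k * exp (- PI * IZR k ^ 2 * s)).

Definition thetao (s : R) : R :=
  zsum (fun k => exp (- PI * IZR (2 * k + 1) ^ 2 * s)).

Definition Fr (r s : R) : R :=
  theta4 (r * s) * theta4 (r / s) - 2 * thetao (r * s) * thetao (r / s).

From Stdlib Require Import Reals Lra Lia ZArith ClassicalEpsilon.
Open Scope R_scope.

(* In the nome [q = exp (- PI t)] one has [theta4 = E - O] and [thetao = O], where
   [E = 1 + 2 sum_j q^((2j+2)^2)] and [O = 2 sum_j q^((2j+1)^2)].  By the symmetry [s <-> 1/s]
   take [s >= 1] and put [rho = PI r >= 3], [alpha = PI r s], [beta = PI r / s]; thus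
   [beta <= rho <= alpha], [alpha beta = rho^2], and the nomes satisfy
   [x = e^-alpha <= e = e^-rho <= y = e^-beta].

   If [rho - beta <= 1] the three nomes are close: [(e - x) (y - e) <= (x + y - 2 e) / 6].
   Expanding [(E - O)(E' - O') - 2 O O'] to second order around the diagonal, the second
   difference of the odd part, whose first monomial is [q] itself, dominates all other terms;
   this already holds for the truncated sums.

   If [rho - beta > 1] then [y >= 5 e / 2] and crude bounds suffice: the value at [s = 1] is
   about [1 - 4 e], while [theta4] at the nome [y] is at most [1 - 2 y + 2 y^4], and at most
   [13/20] for [y >= 4/5] because the gaps [y^(k^2) - y^((k+1)^2)] form a log-concave sequence. *)

Fixpoint sum_lt (h : nat -> R) (N : nat) : R :=
  match N with O => 0 | S M => sum_lt h M + h M end.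

Lemma sum_lt_le (h k : nat -> R) N : (forall j, h j <= k j) -> sum_lt h N <= sum_lt k N.
Proof. intros H; induction N; simpl; [lra | specialize (H N); lra]. Qed.

Lemma sum_lt_ge0 (h : nat -> R) N : (forall j, 0 <= h j) -> 0 <= sum_lt h N.
Proof. intros H; induction N; simpl; [lra | specialize (H N); lra]. Qed.

Lemma sum_lt_scal_l (c : R) (h : nat -> R) N : sum_lt (fun j => c * h j) N = c * sum_lt h N.
Proof. induction N; simpl; [lra | rewrite IHN; ring]. Qed.

Lemma sum_lt_geom_le (q : R) N : 0 <= q < 1 -> sum_lt (fun j => q ^ j) N <= / (1 - q).
Proof.
  intros Hq.
  assert (Htelescope : forall N, sum_lt (fun j => q ^ j) N * (1 - q) = 1 - q ^ N).
  { induction N0; simpl; [ring |]. rewrite Rmult_plus_distr_r, IHN0. ring. }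
  assert (0 <= q ^ N) by (apply pow_le; lra).
  apply Rmult_le_reg_r with (1 - q); [lra |].
  rewrite Htelescope, Rinv_l by lra. lra.
Qed.

Lemma pow_le_one (z : R) n : 0 <= z <= 1 -> z ^ n <= 1.
Proof.
  intros Hz; induction n; simpl; [lra |].
  assert (0 <= z ^ n) by (apply pow_le; lra). nra.
Qed.

Lemma pow_lt_one (z : R) n : 0 <= z < 1 -> (1 <= n)%nat -> z ^ n < 1.
Proof. intros Hz Hn. apply pow_lt_1_compat; [lra | lia]. Qed.

Lemma pow_le_pow_le1 (z : R) (a b : nat) : 0 <= z <= 1 -> (a <= b)%nat -> z ^ b <= z ^ a.
Proof.
  intros Hz Hab. replace b with (a + (b - a))%nat by lia. rewrite pow_add.
  assert (0 <= z ^ a) by (apply pow_le; lra).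
  assert (z ^ (b - a) <= 1) by (apply pow_le_one; lra). nra.
Qed.

Lemma pow_le_pow_mul_pow (z : R) a b j m : 0 <= z <= 1 -> (a + b * j <= m)%nat ->
  z ^ m <= z ^ a * (z ^ b) ^ j.
Proof. intros Hz Hm. rewrite <- pow_mult, <- pow_add. apply pow_le_pow_le1; auto. Qed.

Lemma exp_le_compat (a b : R) : a <= b -> exp a <= exp b.
Proof.
  intros H; destruct (Rle_lt_or_eq_dec a b H); [left; apply exp_increasing; auto | subst; lra].
Qed.

Lemma exp_mul_INR (c : R) (m : nat) : exp (INR m * c) = exp c ^ m.
Proof.
  induction m; [simpl; rewrite Rmult_0_l, exp_0; auto |].
  rewrite S_INR, Rmult_plus_distr_r, Rmult_1_l, exp_plus, IHm. simpl. ring.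
Qed.

Lemma exp_eq_pow_root (t : R) (k : nat) : exp t = exp (t / INR (S k)) ^ S k.
Proof. rewrite <- exp_mul_INR. f_equal. field. apply not_0_INR. lia. Qed.

Lemma exp_ge_pow (t : R) (k : nat) : 0 <= 1 + t / INR (S k) -> (1 + t / INR (S k)) ^ S k <= exp t.
Proof.
  intros H. rewrite (exp_eq_pow_root t k). apply pow_incr. split; auto. apply exp_ineq1_le.
Qed.

Lemma exp_3_ge : 18 <= exp 3.
Proof.
  assert (H := exp_ge_pow 3 63).
  replace (1 + 3 / INR 64) with (67 / 64) in H
    by (replace (INR 64) with 64 by (rewrite INR_IZR_INZ; simpl; lra); field).
  assert (18 <= (67 / 64) ^ 64) by (simpl; lra). lra.
Qed.

Lemma exp_1_ge : 5 / 2 <= exp 1.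
Proof.
  assert (H := exp_ge_pow 1 7).
  replace (1 + 1 / INR 8) with (9 / 8) in H
    by (replace (INR 8) with 8 by (rewrite INR_IZR_INZ; simpl; lra); field).
  assert (5 / 2 <= (9 / 8) ^ 8) by (simpl; lra). lra.
Qed.

(* Compare eighth roots: [exp (B / 8) >= 1 + B / 8] and [exp (- B / 8) >= 1 - B / 8]. *)
Lemma exp_add_exp_opp_ge (B : R) : 0 <= B <= 1 -> 2 + 7 / 8 * (B * B) <= exp B + exp (- B).
Proof.
  intros HB. set (u := B / 8).
  assert (E8 : INR (S 7) = 8) by (rewrite INR_IZR_INZ; simpl; lra).
  assert (Ep : exp B = exp u ^ 8) by (rewrite (exp_eq_pow_root B 7), E8; reflexivity).
  assert (Em : exp (- B) = exp (- u) ^ 8).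
  { rewrite (exp_eq_pow_root (- B) 7), E8. unfold u. do 3 f_equal. field. }
  assert (Hu : 0 <= u <= 1 / 8) by (unfold u; lra).
  assert (H1 : (1 + u) ^ 8 <= exp u ^ 8) by (apply pow_incr; split; [lra | apply exp_ineq1_le]).
  assert (H2 : (1 - u) ^ 8 <= exp (- u) ^ 8).
  { apply pow_incr. split; [lra |]. replace (1 - u) with (1 + - u) by ring. apply exp_ineq1_le. }
  assert (H3 : 2 + 56 * (u * u) <= (1 + u) ^ 8 + (1 - u) ^ 8).
  { assert (0 <= u * u) by nra. assert (0 <= u * u * u * u) by nra.
    assert (0 <= u * u * u * u * u * u) by nra. assert (0 <= u * u * u * u * u * u * u * u) by nra.
    simpl. nra. }
  replace (B * B) with (64 * (u * u)) by (unfold u; field). lra.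
Qed.

Lemma pow_one_sub_ge (d : R) m : 0 <= d <= 1 -> 1 - INR m * d <= (1 - d) ^ m.
Proof.
  intros Hd. induction m; [simpl; lra |].
  rewrite S_INR. simpl. assert (0 <= (1 - d) ^ m) by (apply pow_le; lra).
  assert (0 <= INR m) by apply pos_INR. nra.
Qed.

Lemma pow_one_sub_mul_le (d : R) m : 0 <= d <= 1 -> (1 - d) ^ m * (1 + INR m * d) <= 1.
Proof.
  intros Hd. induction m; [simpl; lra |].
  rewrite S_INR. simpl. assert (0 <= (1 - d) ^ m) by (apply pow_le; lra).
  assert (0 <= INR m) by apply pos_INR.
  assert (H1 : (1 - d) * (1 + (INR m + 1) * d) <= 1 + INR m * d) by nra.
  assert ((1 - d) ^ m * ((1 - d) * (1 + (INR m + 1) * d)) <= (1 - d) ^ m * (1 + INR m * d))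
    by (apply Rmult_le_compat_l; lra).
  replace ((1 - d) * (1 - d) ^ m * (1 + (INR m + 1) * d))
    with ((1 - d) ^ m * ((1 - d) * (1 + (INR m + 1) * d))) by ring.
  lra.
Qed.

Lemma pow_sub_bounds (x y : R) n : 0 <= x <= y ->
  0 <= y ^ S n - x ^ S n <= INR (S n) * y ^ n * (y - x).
Proof.
  intros Hxy. induction n as [| n [I1 I2]]; [simpl; lra |].
  assert (0 <= y ^ n) by (apply pow_le; lra).
  assert (0 <= x ^ S n) by (apply pow_le; lra).
  replace (y ^ S (S n) - x ^ S (S n)) with (y * (y ^ S n - x ^ S n) + x ^ S n * (y - x))
    by (simpl; ring).
  assert (y * (y ^ S n - x ^ S n) <= y * (INR (S n) * y ^ n * (y - x)))
    by (apply Rmult_le_compat_l; lra).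
  assert (x ^ S n * (y - x) <= y ^ S n * (y - x))
    by (apply Rmult_le_compat_r; [lra | apply pow_incr; lra]).
  rewrite S_INR. simpl in *. split; nra.
Qed.

Section SecondDifference.
Variables x e y : R.
Hypothesis Hxe : 0 <= x <= e.
Hypothesis Hey : e <= y.
Hypothesis Hconvex : 0 <= x + y - 2 * e.

Let D := x + y - 2 * e.
Let P := e - x.
Let Q := y - e.

Lemma pow_second_diff_succ n :
  x ^ S (S n) + y ^ S (S n) - 2 * e ^ S (S n) =
  e * (x ^ S n + y ^ S n - 2 * e ^ S n) + D * y ^ S n + P * (y ^ S n - x ^ S n).
Proof. unfold D, P; simpl; ring. Qed.

Lemma pow_second_diff_ge0 n : 0 <= x ^ S n + y ^ S n - 2 * e ^ S n.
Proof.
  induction n; [simpl; unfold D in *; lra |].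
  rewrite pow_second_diff_succ.
  destruct (pow_sub_bounds x y n) as [J _]; [lra |].
  assert (0 <= y ^ S n) by (apply pow_le; lra).
  assert (0 <= e * (x ^ S n + y ^ S n - 2 * e ^ S n)) by (apply Rmult_le_pos; lra).
  assert (0 <= D * y ^ S n) by (apply Rmult_le_pos; unfold D; lra).
  assert (0 <= P * (y ^ S n - x ^ S n)) by (apply Rmult_le_pos; unfold P; lra).
  lra.
Qed.

(* Taylor's bound with the second derivative at the right end point, using [e - x <= y - e]. *)
Lemma pow_second_diff_le n :
  x ^ S n + y ^ S n - 2 * e ^ S n <=
  INR (S n) * y ^ n * D + INR (S n) * INR n * y ^ pred n * (P * Q).
Proof.
  assert (HP : 0 <= P) by (unfold P; lra). assert (HQ : 0 <= Q) by (unfold Q; lra).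
  assert (HPQ : P <= Q) by (unfold P, Q, D in *; lra). assert (HD : 0 <= D) by (unfold D; lra).
  induction n as [| n IH]; [simpl; unfold D; lra |].
  rewrite pow_second_diff_succ.
  assert (Hn : 0 <= INR n) by apply pos_INR. assert (HSn : 0 <= INR (S n)) by apply pos_INR.
  assert (Hyn : 0 <= y ^ n) by (apply pow_le; lra).
  assert (Hyp : 0 <= y ^ pred n) by (apply pow_le; lra).
  assert (HPQ0 : 0 <= P * Q) by (apply Rmult_le_pos; lra).
  assert (Hcentre : e * (x ^ S n + y ^ S n - 2 * e ^ S n) <=
                    INR (S n) * y ^ S n * D + INR (S n) * INR n * y ^ n * (P * Q)).
  { apply Rle_trans with (e * (INR (S n) * y ^ n * D + INR (S n) * INR n * y ^ pred n * (P * Q)));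
      [apply Rmult_le_compat_l; lra |].
    assert (INR (S n) * INR n * y ^ pred n * y <= INR (S n) * INR n * y ^ n).
    { destruct n; simpl; [lra |]. right; ring. }
    assert (0 <= INR (S n) * y ^ n * D) by (repeat apply Rmult_le_pos; lra).
    assert (0 <= INR (S n) * INR n * y ^ pred n * (P * Q)) by (repeat apply Rmult_le_pos; lra).
    simpl (y ^ S n). nra. }
  assert (Hside : P * (y ^ S n - x ^ S n) <= 2 * INR (S n) * y ^ n * (P * Q)).
  { destruct (pow_sub_bounds x y n) as [_ J]; [lra |].
    apply Rle_trans with (P * (INR (S n) * y ^ n * (y - x))); [apply Rmult_le_compat_l; lra |].
    replace (y - x) with (P + Q) by (unfold P, Q; ring).
    assert (0 <= INR (S n) * y ^ n) by (apply Rmult_le_pos; lra).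
    assert (P * P <= P * Q) by (apply Rmult_le_compat_l; lra). nra. }
  rewrite !S_INR in *. simpl pred. simpl (y ^ S n) in *. nra.
Qed.

End SecondDifference.

(** * Sums of powers [z ^ (m j + 1)] and their derivatives *)

Section PowSum.
Variable m : nat -> nat.

Definition pow_sum (z : R) (N : nat) : R := sum_lt (fun j => z ^ S (m j)) N.
Definition pow_sum_d1 (z : R) (N : nat) : R := sum_lt (fun j => INR (S (m j)) * z ^ m j) N.
Definition pow_sum_d2 (z : R) (N : nat) : R :=
  sum_lt (fun j => INR (S (m j)) * INR (m j) * z ^ pred (m j)) N.

Lemma pow_sum_ge0 z N : 0 <= z -> 0 <= pow_sum z N.
Proof. intros; apply sum_lt_ge0; intros; apply pow_le; auto. Qed.

Lemma pow_sum_le_succ z N : 0 <= z -> pow_sum z N <= pow_sum z (S N).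
Proof.
  intros. unfold pow_sum; cbn [sum_lt]. assert (0 <= z ^ S (m N)) by (apply pow_le; auto). lra.
Qed.

Lemma pow_sum_sub_bounds x y N : 0 <= x <= y ->
  0 <= pow_sum y N - pow_sum x N <= (y - x) * pow_sum_d1 y N.
Proof.
  intros H. unfold pow_sum, pow_sum_d1. induction N; cbn [sum_lt]; [lra |].
  destruct (pow_sub_bounds x y (m N) H). nra.
Qed.

Lemma pow_sum_second_diff_bounds x e y N :
  0 <= x <= e -> e <= y -> 0 <= x + y - 2 * e ->
  0 <= pow_sum x N + pow_sum y N - 2 * pow_sum e N <=
  (x + y - 2 * e) * pow_sum_d1 y N + ((e - x) * (y - e)) * pow_sum_d2 y N.
Proof.
  intros H1 H2 H3. unfold pow_sum, pow_sum_d1, pow_sum_d2. induction N; cbn [sum_lt]; [lra |].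
  assert (L := pow_second_diff_ge0 x e y H1 H2 H3 (m N)).
  assert (U := pow_second_diff_le x e y H1 H2 H3 (m N)).
  nra.
Qed.

Lemma pow_sum_second_diff_ge x e y N :
  0 <= x <= e -> e <= y -> 0 <= x + y - 2 * e -> m 0%nat = 0%nat -> (1 <= N)%nat ->
  x + y - 2 * e <= pow_sum x N + pow_sum y N - 2 * pow_sum e N.
Proof.
  intros H1 H2 H3 Hm0 HN. induction N as [| N IH]; [lia |].
  destruct N.
  - unfold pow_sum; cbn [sum_lt]. rewrite Hm0, !pow_1. lra.
  - assert (I := IH ltac:(lia)). unfold pow_sum in *; cbn [sum_lt] in *.
    assert (L := pow_second_diff_ge0 x e y H1 H2 H3 (m (S N))). lra.
Qed.

Lemma pow_sum_le_geom z a b N : 0 <= z < 1 -> (1 <= b)%nat -> (forall j, a + b * j <= m j)%nat ->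
  pow_sum z N <= z ^ S a * / (1 - z ^ b).
Proof.
  intros Hz Hb Hm. unfold pow_sum.
  assert (Hzb : 0 <= z ^ b < 1) by (split; [apply pow_le | apply pow_lt_one]; lra || lia).
  apply Rle_trans with (sum_lt (fun j => z ^ S a * (z ^ b) ^ j) N).
  - apply sum_lt_le. intros j. apply pow_le_pow_mul_pow; [lra |]. specialize (Hm j). lia.
  - rewrite sum_lt_scal_l. apply Rmult_le_compat_l; [apply pow_le; lra |].
    apply sum_lt_geom_le; auto.
Qed.

Lemma INR_S_le_pow2 k : INR (S k) <= 2 ^ k.
Proof.
  induction k; [simpl; lra |]. rewrite S_INR. replace (2 ^ S k) with (2 * 2 ^ k) by (simpl; ring).
  assert (1 <= 2 ^ k) by (apply pow_R1_Rle; lra). lra.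
Qed.

Lemma INR_S_mul_le_pow3 k : INR (S k) * INR k <= 2 * 3 ^ pred k.
Proof.
  destruct k; [simpl; lra |]. simpl pred.
  induction k; [simpl; lra |].
  rewrite !S_INR in *. replace (3 ^ S k) with (3 * 3 ^ k) by (simpl; ring).
  assert (0 <= INR k) by apply pos_INR. nra.
Qed.

Lemma pow_sum_d1_le_geom z a b N : 0 <= z -> 2 * z < 1 -> (1 <= b)%nat ->
  (forall j, a + b * j <= m j)%nat ->
  pow_sum_d1 z N <= (2 * z) ^ a * / (1 - (2 * z) ^ b).
Proof.
  intros Hz Hz2 Hb Hm. unfold pow_sum_d1. set (w := 2 * z).
  assert (Hwb : 0 <= w ^ b < 1) by (unfold w; split; [apply pow_le | apply pow_lt_one]; lra || lia).
  apply Rle_trans with (sum_lt (fun j => w ^ a * (w ^ b) ^ j) N).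
  - apply sum_lt_le. intros j. apply Rle_trans with (w ^ m j).
    + unfold w. rewrite Rpow_mult_distr. apply Rmult_le_compat_r; [apply pow_le; lra |].
      apply INR_S_le_pow2.
    + apply pow_le_pow_mul_pow; [unfold w; lra | apply Hm].
  - rewrite sum_lt_scal_l. apply Rmult_le_compat_l; [apply pow_le; unfold w; lra |].
    apply sum_lt_geom_le; auto.
Qed.

Lemma pow_sum_d2_le_geom z a b N : 0 <= z -> 3 * z < 1 -> (1 <= b)%nat ->
  (forall j, a + b * j <= pred (m j))%nat ->
  pow_sum_d2 z N <= 2 * ((3 * z) ^ a * / (1 - (3 * z) ^ b)).
Proof.
  intros Hz Hz3 Hb Hm. unfold pow_sum_d2. set (w := 3 * z).
  assert (Hwb : 0 <= w ^ b < 1) by (unfold w; split; [apply pow_le | apply pow_lt_one]; lra || lia).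
  apply Rle_trans with (sum_lt (fun j => 2 * (w ^ a * (w ^ b) ^ j)) N).
  - apply sum_lt_le. intros j. apply Rle_trans with (2 * w ^ pred (m j)).
    + unfold w. rewrite Rpow_mult_distr.
      assert (0 <= z ^ pred (m j)) by (apply pow_le; lra).
      assert (Hk := INR_S_mul_le_pow3 (m j)). nra.
    + apply Rmult_le_compat_l; [lra |]. apply pow_le_pow_mul_pow; [unfold w; lra | apply Hm].
  - rewrite !sum_lt_scal_l. apply Rmult_le_compat_l; [lra |].
    apply Rmult_le_compat_l; [apply pow_le; unfold w; lra |]. apply sum_lt_geom_le; auto.
Qed.

End PowSum.

Lemma geom_tail_le_mono (w c : R) a b : 0 <= w <= c -> c < 1 -> (1 <= b)%nat ->
  w ^ a * / (1 - w ^ b) <= c ^ a * / (1 - c ^ b).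
Proof.
  intros Hw Hc Hb.
  assert (w ^ a <= c ^ a) by (apply pow_incr; lra).
  assert (w ^ b <= c ^ b) by (apply pow_incr; lra).
  assert (c ^ b < 1) by (apply pow_lt_one; lra || lia).
  assert (0 <= w ^ a) by (apply pow_le; lra).
  apply Rmult_le_compat; auto.
  - left; apply Rinv_0_lt_compat. lra.
  - apply Rinv_le_contravar; lra.
Qed.

(** * The nome expansions of [theta4] and [thetao] *)

Lemma Un_cv_const c : Un_cv (fun _ => c) c.
Proof. intros eps Heps. exists 0%nat. intros n _. unfold Rdist. rewrite Rminus_diag, Rabs_R0. lra. Qed.

Lemma Un_cv_le u l c : Un_cv u l -> (forall n, u n <= c) -> l <= c.
Proof. intros H Hc. apply (Rle_cv_lim (Vn := fun _ => c) Hc H (Un_cv_const c)). Qed.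

Lemma Un_cv_ge u l c : Un_cv u l -> (forall n, c <= u n) -> c <= l.
Proof. intros H Hc. apply (Rle_cv_lim (Un := fun _ => c) Hc (Un_cv_const c) H). Qed.

Lemma Un_cv_shift u l : Un_cv u l -> Un_cv (fun n => u (S n)) l.
Proof. intros H eps Heps. destruct (H eps Heps) as [N HN]. exists N. intros n Hn. apply HN. lia. Qed.

Lemma Un_cv_even_odd u l :
  Un_cv (fun n => u (2 * n)%nat) l -> Un_cv (fun n => u (S (2 * n))) l -> Un_cv u l.
Proof.
  intros H1 H2 eps Heps. destruct (H1 eps Heps) as [N1 HN1]. destruct (H2 eps Heps) as [N2 HN2].
  exists (2 * (N1 + N2))%nat. intros n Hn.
  destruct (Nat.Even_or_Odd n) as [[k Hk] | [k Hk]]; subst n.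
  - apply HN1. lia.
  - replace (2 * k + 1)%nat with (S (2 * k)) by lia. apply HN2. lia.
Qed.

Lemma Un_cv_pow_unbounded (z : R) (m : nat -> nat) : 0 <= z < 1 -> (forall M, (M <= m M)%nat) ->
  Un_cv (fun M => z ^ m M) 0.
Proof.
  intros Hz Hm eps Heps.
  destruct (pow_lt_1_zero z ltac:(rewrite Rabs_right; lra) eps Heps) as [N HN].
  exists N. intros n Hn. unfold Rdist. rewrite Rminus_0_r. apply HN. specialize (Hm n). lia.
Qed.

Definition seq_lim (u : nat -> R) : R := epsilon (inhabits 0) (fun l => Un_cv u l).

Lemma seq_lim_spec u : (exists l, Un_cv u l) -> Un_cv u (seq_lim u).
Proof. apply (epsilon_spec (inhabits 0) (fun l => Un_cv u l)). Qed.

Lemma zsum_eq f l : Un_cv (zpartial f) l -> zsum f = l.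
Proof.
  intros H. apply (UL_sequence (zpartial f)); [| exact H].
  apply (epsilon_spec (inhabits 0) (fun l => Un_cv (zpartial f) l)). exists l; exact H.
Qed.

Lemma zpartial_0 f : zpartial f 0 = f 0%Z.
Proof. reflexivity. Qed.

Lemma zpartial_S f N :
  zpartial f (S N) = zpartial f N + f (Z.of_nat (S N)) + f (- Z.of_nat (S N))%Z.
Proof.
  unfold zpartial. replace (2 * S N)%nat with (S (S (2 * N))) by lia.
  rewrite tech5, decomp_sum by lia. simpl pred.
  rewrite (sum_eq (fun i => f (Z.of_nat (S i) - Z.of_nat (S N))%Z)
                  (fun n => f (Z.of_nat n - Z.of_nat N)%Z)) by (intros i _; f_equal; lia).
  replace (Z.of_nat 0 - Z.of_nat (S N))%Z with (- Z.of_nat (S N))%Z by lia.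
  replace (Z.of_nat (S (S (2 * N))) - Z.of_nat (S N))%Z with (Z.of_nat (S N)) by lia.
  replace (N + (N + 0))%nat with (2 * N)%nat by lia. ring.
Qed.

(* [(2 j + 2) ^ 2 = S (even_sq_pred j)] and [(2 j + 1) ^ 2 = S (odd_sq_pred j)]. *)
Definition even_sq_pred (j : nat) : nat := (4 * j * j + 8 * j + 3)%nat.
Definition odd_sq_pred (j : nat) : nat := (4 * j * j + 4 * j)%nat.

Definition theta_even_partial (z : R) (N : nat) : R := 1 + 2 * pow_sum even_sq_pred z N.
Definition theta_odd_partial (z : R) (N : nat) : R := 2 * pow_sum odd_sq_pred z N.
Definition theta_even (z : R) : R := seq_lim (theta_even_partial z).
Definition theta_odd (z : R) : R := seq_lim (theta_odd_partial z).

Lemma pow_sum_even_le z N : 0 <= z < 1 -> pow_sum even_sq_pred z N <= z ^ 4 * / (1 - z ^ 8).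
Proof.
  intros Hz. apply (pow_sum_le_geom _ z 3 8); [auto | lia | intros j; unfold even_sq_pred; nia].
Qed.

Lemma pow_sum_odd_le z N : 0 <= z < 1 -> pow_sum odd_sq_pred z N <= z * / (1 - z ^ 8).
Proof.
  intros Hz. replace (z * / (1 - z ^ 8)) with (z ^ 1 * / (1 - z ^ 8)) by ring.
  apply (pow_sum_le_geom _ z 0 8); [auto | lia | intros j; unfold odd_sq_pred; nia].
Qed.

Lemma pow_sum_even_le_odd z N : 0 <= z <= 1 -> pow_sum even_sq_pred z N <= pow_sum odd_sq_pred z N.
Proof.
  intros Hz. apply sum_lt_le. intros j. apply pow_le_pow_le1; auto.
  unfold even_sq_pred, odd_sq_pred. lia.
Qed.

Lemma theta_even_partial_cv z : 0 <= z < 1 -> Un_cv (theta_even_partial z) (theta_even z).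
Proof.
  intros Hz. apply seq_lim_spec.
  assert (Hg : Un_growing (theta_even_partial z)).
  { intros n. unfold theta_even_partial.
    assert (H := pow_sum_le_succ even_sq_pred z n ltac:(lra)). lra. }
  assert (Hb : has_ub (theta_even_partial z)).
  { exists (1 + 2 * (z ^ 4 * / (1 - z ^ 8))). intros v [n ->]. unfold theta_even_partial.
    assert (H := pow_sum_even_le z n Hz). lra. }
  destruct (growing_cv _ Hg Hb) as [l Hl]. exists l; auto.
Qed.

Lemma theta_odd_partial_cv z : 0 <= z < 1 -> Un_cv (theta_odd_partial z) (theta_odd z).
Proof.
  intros Hz. apply seq_lim_spec.
  assert (Hg : Un_growing (theta_odd_partial z)).
  { intros n. unfold theta_odd_partial.
    assert (H := pow_sum_le_succ odd_sq_pred z n ltac:(lra)). lra. }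
  assert (Hb : has_ub (theta_odd_partial z)).
  { exists (2 * (z * / (1 - z ^ 8))). intros v [n ->]. unfold theta_odd_partial.
    assert (H := pow_sum_odd_le z n Hz). lra. }
  destruct (growing_cv _ Hg Hb) as [l Hl]. exists l; auto.
Qed.

Lemma theta_even_bounds z : 0 <= z < 1 -> 1 <= theta_even z <= 1 + 2 * (z ^ 4 * / (1 - z ^ 8)).
Proof.
  intros Hz. assert (H := theta_even_partial_cv z Hz). unfold theta_even_partial in H. split.
  - apply (Un_cv_ge _ _ 1 H). intros n.
    assert (0 <= pow_sum even_sq_pred z n) by (apply pow_sum_ge0; lra). lra.
  - apply (Un_cv_le _ _ _ H). intros n. assert (H' := pow_sum_even_le z n Hz). lra.
Qed.

Lemma theta_odd_bounds z : 0 <= z < 1 -> 0 <= theta_odd z <= 2 * (z * / (1 - z ^ 8)).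
Proof.
  intros Hz. assert (H := theta_odd_partial_cv z Hz). unfold theta_odd_partial in H. split.
  - apply (Un_cv_ge _ _ 0 H). intros n.
    assert (0 <= pow_sum odd_sq_pred z n) by (apply pow_sum_ge0; lra). lra.
  - apply (Un_cv_le _ _ _ H). intros n. assert (H' := pow_sum_odd_le z n Hz). lra.
Qed.

Definition nome (t : R) : R := exp (- PI * t).

Lemma nome_bounds t : 0 < t -> 0 < nome t < 1.
Proof.
  intros Ht. unfold nome. split; [apply exp_pos |]. rewrite <- exp_0. apply exp_increasing.
  assert (0 < PI) by apply PI_RGT_0. nra.
Qed.

Lemma exp_sq_nome (t : R) (k : nat) : exp (- PI * INR k ^ 2 * t) = nome t ^ (k * k).
Proof. unfold nome. rewrite <- exp_mul_INR. f_equal. rewrite mult_INR. ring. Qed.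

Fixpoint signed_sq_sum (z : R) (N : nat) : R :=
  match N with O => 0 | S M => signed_sq_sum z M + (-1) ^ S M * z ^ (S M * S M) end.

Lemma zpartial_theta4 t N :
  zpartial (fun k => powerRZ (-1) k * exp (- PI * IZR k ^ 2 * t)) N =
  1 + 2 * signed_sq_sum (nome t) N.
Proof.
  induction N.
  - rewrite zpartial_0. simpl. replace (- PI * (0 * (0 * 1)) * t) with 0 by ring. rewrite exp_0. ring.
  - rewrite zpartial_S, IHN, <- pow_powerRZ, powerRZ_neg', <- pow_powerRZ, opp_IZR, <- INR_IZR_INZ.
    replace ((- INR (S N)) ^ 2) with (INR (S N) ^ 2) by ring.
    rewrite exp_sq_nome, <- pow_inv. cbn [signed_sq_sum].
    replace (/ -1) with (-1) by field. ring.
Qed.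

Lemma signed_sq_sum_even z M :
  signed_sq_sum z (2 * M) = pow_sum even_sq_pred z M - pow_sum odd_sq_pred z M.
Proof.
  induction M; [unfold pow_sum; simpl; ring |].
  replace (2 * S M)%nat with (S (S (2 * M))) by lia. cbn [signed_sq_sum]. rewrite IHM.
  unfold pow_sum. cbn [sum_lt].
  rewrite pow_1_odd. replace (S (S (2 * M))) with (2 * S M)%nat by lia. rewrite pow_1_even.
  replace (S (2 * M) * S (2 * M))%nat with (S (odd_sq_pred M)) by (unfold odd_sq_pred; nia).
  replace (2 * S M * (2 * S M))%nat with (S (even_sq_pred M)) by (unfold even_sq_pred; nia).
  ring.
Qed.

Lemma signed_sq_sum_odd z M :
  signed_sq_sum z (S (2 * M)) =
  pow_sum even_sq_pred z M - pow_sum odd_sq_pred z M - z ^ S (odd_sq_pred M).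
Proof.
  cbn [signed_sq_sum]. rewrite signed_sq_sum_even, pow_1_odd.
  replace (S (2 * M) * S (2 * M))%nat with (S (odd_sq_pred M)) by (unfold odd_sq_pred; nia). ring.
Qed.

Lemma signed_sq_sum_even_cv z : 0 <= z < 1 ->
  Un_cv (fun N => 1 + 2 * signed_sq_sum z (2 * N)) (theta_even z - theta_odd z).
Proof.
  intros Hz. apply (Un_cv_ext (fun N => theta_even_partial z N - theta_odd_partial z N)).
  { intros n. rewrite signed_sq_sum_even. unfold theta_even_partial, theta_odd_partial. ring. }
  apply CV_minus; [apply theta_even_partial_cv | apply theta_odd_partial_cv]; auto.
Qed.

Lemma Un_cv_pow_odd_sq z : 0 <= z < 1 -> Un_cv (fun n => z ^ S (odd_sq_pred n)) 0.
Proof. intros Hz. apply Un_cv_pow_unbounded; auto. intros M; unfold odd_sq_pred; nia. Qed.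

Lemma theta4_nome t : 0 < t -> theta4 t = theta_even (nome t) - theta_odd (nome t).
Proof.
  intros Ht. assert (Hz : 0 <= nome t < 1) by (destruct (nome_bounds t Ht); lra).
  unfold theta4. apply zsum_eq. apply Un_cv_even_odd.
  - apply (Un_cv_ext (fun n => 1 + 2 * signed_sq_sum (nome t) (2 * n))).
    { intros n. rewrite zpartial_theta4. reflexivity. }
    apply signed_sq_sum_even_cv; auto.
  - apply (Un_cv_ext
      (fun n => (1 + 2 * signed_sq_sum (nome t) (2 * n)) - 2 * nome t ^ S (odd_sq_pred n))).
    { intros n. rewrite zpartial_theta4, signed_sq_sum_odd, signed_sq_sum_even. ring. }
    replace (theta_even (nome t) - theta_odd (nome t))
      with ((theta_even (nome t) - theta_odd (nome t)) - 2 * 0) by ring.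
    apply CV_minus; [apply signed_sq_sum_even_cv; auto |].
    apply CV_mult; [apply Un_cv_const | apply Un_cv_pow_odd_sq; auto].
Qed.

Lemma exp_odd_sq_nome t (k : Z) (j : nat) :
  (2 * k + 1 = Z.of_nat (2 * j + 1) \/ 2 * k + 1 = - Z.of_nat (2 * j + 1))%Z ->
  exp (- PI * IZR (2 * k + 1) ^ 2 * t) = nome t ^ S (odd_sq_pred j).
Proof.
  intros Hk. replace (IZR (2 * k + 1) ^ 2) with (INR (2 * j + 1) ^ 2).
  - rewrite exp_sq_nome. f_equal. unfold odd_sq_pred. nia.
  - rewrite INR_IZR_INZ. destruct Hk as [-> | ->]; [| rewrite opp_IZR]; ring.
Qed.

Lemma zpartial_thetao t N :
  zpartial (fun k => exp (- PI * IZR (2 * k + 1) ^ 2 * t)) N =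
  theta_odd_partial (nome t) N + nome t ^ S (odd_sq_pred N).
Proof.
  unfold theta_odd_partial, pow_sum. induction N.
  - rewrite zpartial_0, (exp_odd_sq_nome t 0 0) by (left; reflexivity). simpl. ring.
  - rewrite zpartial_S, IHN, (exp_odd_sq_nome t (- Z.of_nat (S N)) N) by (right; lia).
    rewrite (exp_odd_sq_nome t (Z.of_nat (S N)) (S N)) by (left; lia).
    cbn [sum_lt]. ring.
Qed.

Lemma thetao_nome t : 0 < t -> thetao t = theta_odd (nome t).
Proof.
  intros Ht. assert (Hz : 0 <= nome t < 1) by (destruct (nome_bounds t Ht); lra).
  unfold thetao. apply zsum_eq.
  apply (Un_cv_ext (fun n => theta_odd_partial (nome t) n + nome t ^ S (odd_sq_pred n))).
  { intros n. rewrite zpartial_thetao. reflexivity. }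
  rewrite <- (Rplus_0_r (theta_odd (nome t))).
  apply CV_plus; [apply theta_odd_partial_cv | apply Un_cv_pow_odd_sq]; auto.
Qed.

Definition Phi (a b c d : R) : R := (a - b) * (c - d) - 2 * b * d.

Definition Fq (x y : R) : R := Phi (theta_even x) (theta_odd x) (theta_even y) (theta_odd y).

Lemma Fr_nome r s : 0 < r -> 0 < s -> Fr r s = Fq (nome (r * s)) (nome (r / s)).
Proof.
  intros Hr Hs. unfold Fr, Fq, Phi.
  rewrite !theta4_nome, !thetao_nome; [ring | apply Rdiv_lt_0_compat | | apply Rdiv_lt_0_compat |];
    auto; nra.
Qed.

(** * Three close nomes *)

Lemma pow_sum_sub_le_scaled m x y N c : 0 <= x <= y -> pow_sum_d1 m y N <= c ->
  0 <= pow_sum m y N - pow_sum m x N <= (y - x) * c.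
Proof.
  intros Hxy Hc. destruct (pow_sum_sub_bounds m x y N Hxy) as [H1 H2].
  assert ((y - x) * pow_sum_d1 m y N <= (y - x) * c) by (apply Rmult_le_compat_l; lra). lra.
Qed.

Lemma pow_sum_second_diff_le_scaled m x e y N c1 c2 :
  0 <= x <= e -> e <= y -> 0 <= x + y - 2 * e ->
  pow_sum_d1 m y N <= c1 -> 0 <= pow_sum_d2 m y N <= c2 ->
  0 <= pow_sum m x N + pow_sum m y N - 2 * pow_sum m e N <=
  (x + y - 2 * e) * c1 + ((e - x) * (y - e)) * c2.
Proof.
  intros H1 H2 H3 Hc1 Hc2.
  destruct (pow_sum_second_diff_bounds m x e y N H1 H2 H3) as [L U].
  assert ((x + y - 2 * e) * pow_sum_d1 m y N <= (x + y - 2 * e) * c1)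
    by (apply Rmult_le_compat_l; lra).
  assert (0 <= (e - x) * (y - e)) by (apply Rmult_le_pos; lra).
  assert ((e - x) * (y - e) * pow_sum_d2 m y N <= (e - x) * (y - e) * c2)
    by (apply Rmult_le_compat_l; lra).
  lra.
Qed.

Lemma pow_sum_d1_even_le z N : 0 <= z <= 1 / 6 -> pow_sum_d1 even_sq_pred z N <= 1 / 20.
Proof.
  intros Hz.
  eapply Rle_trans; [apply (pow_sum_d1_le_geom _ z 3 8); try lra; try lia;
                     intros j; unfold even_sq_pred; nia |].
  eapply Rle_trans; [apply (geom_tail_le_mono (2 * z) (1 / 3) 3 8); lra || lia |].
  replace (/ (1 - (1 / 3) ^ 8)) with (6561 / 6560) by (simpl; field). simpl. lra.
Qed.

Lemma pow_sum_d2_even_bounds z N : 0 <= z <= 1 / 6 -> 0 <= pow_sum_d2 even_sq_pred z N <= 3 / 5.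
Proof.
  intros Hz. split.
  { apply sum_lt_ge0. intros j. repeat apply Rmult_le_pos; try apply pos_INR. apply pow_le; lra. }
  eapply Rle_trans; [apply (pow_sum_d2_le_geom _ z 2 8); try lra; try lia;
                     intros j; unfold even_sq_pred; rewrite Nat.add_succ_r; simpl pred; nia |].
  assert (H := geom_tail_le_mono (3 * z) (1 / 2) 2 8 ltac:(lra) ltac:(lra) ltac:(lia)).
  replace (/ (1 - (1 / 2) ^ 8)) with (256 / 255) in H by (simpl; field).
  replace ((1 / 2) ^ 2) with (1 / 4) in H by (simpl; field). lra.
Qed.

Lemma pow_sum_d1_odd_le z N : 0 <= z <= 1 / 6 -> pow_sum_d1 odd_sq_pred z N <= 11 / 10.
Proof.
  intros Hz.
  eapply Rle_trans; [apply (pow_sum_d1_le_geom _ z 0 8); try lra; try lia;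
                     intros j; unfold odd_sq_pred; nia |].
  eapply Rle_trans; [apply (geom_tail_le_mono (2 * z) (1 / 3) 0 8); lra || lia |].
  replace (/ (1 - (1 / 3) ^ 8)) with (6561 / 6560) by (simpl; field). simpl. lra.
Qed.

(* The odd part starts with [z],
   so [dO >= 2 D], while by [P Q <= D / 6] all other terms are [O(D)] with small constants. *)
Lemma Phi_le_of_difference_bounds (ex ee ey ox oe oy D P Q : R) :
  0 <= ee - ex <= P * (1 / 20) -> 0 <= ey - ee <= Q * (1 / 20) ->
  0 <= oe - ox <= P * (11 / 10) -> 0 <= oy - oe <= Q * (11 / 10) ->
  0 <= ex + ey - 2 * ee <= D * (1 / 20) + (P * Q) * (3 / 5) ->
  D <= ox + oy - 2 * oe ->
  0 <= ee <= oe -> 0 <= D -> 0 <= P -> 0 <= Q -> P * Q <= D / 6 ->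
  Phi (1 + 2 * ex) (2 * ox) (1 + 2 * ey) (2 * oy) <= Phi (1 + 2 * ee) (2 * oe) (1 + 2 * ee) (2 * oe).
Proof.
  intros Ha1 Ha2 Hb1 Hb2 HdE HdO He HD HP HQ HPQ. unfold Phi.
  set (E := 1 + 2 * ee). set (O := 2 * oe).
  set (a1 := 2 * (ee - ex)). set (a2 := 2 * (ey - ee)).
  set (b1 := 2 * (oe - ox)). set (b2 := 2 * (oy - oe)).
  set (dE := 2 * (ex + ey - 2 * ee)). set (dO := 2 * (ox + oy - 2 * oe)).
  assert (Hexpand :
    ((1 + 2 * ex) - 2 * ox) * ((1 + 2 * ey) - 2 * oy) - 2 * (2 * ox) * (2 * oy) -
    (((1 + 2 * ee) - 2 * oe) * ((1 + 2 * ee) - 2 * oe) - 2 * (2 * oe) * (2 * oe)) =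
    (E - O) * dE - (E + O) * dO - a1 * a2 + a1 * b2 + a2 * b1 + b1 * b2)
    by (unfold E, O, a1, a2, b1, b2, dE, dO; ring).
  assert (T1 : (E - O) * dE <= dE).
  { assert (0 <= dE) by (unfold dE; lra). assert (E - O <= 1) by (unfold E, O; lra). nra. }
  assert (T2 : - (E + O) * dO <= - dO).
  { assert (0 <= dO) by (unfold dO; lra). assert (1 <= E + O) by (unfold E, O; lra). nra. }
  assert (T3 : 0 <= a1 * a2) by (apply Rmult_le_pos; unfold a1, a2; lra).
  assert (C1 : a1 * b2 <= (2 * P * (1 / 20)) * (2 * Q * (11 / 10)))
    by (apply Rmult_le_compat; unfold a1, b2; lra).
  assert (C2 : a2 * b1 <= (2 * Q * (1 / 20)) * (2 * P * (11 / 10)))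
    by (apply Rmult_le_compat; unfold a2, b1; lra).
  assert (C3 : b1 * b2 <= (2 * P * (11 / 10)) * (2 * Q * (11 / 10)))
    by (apply Rmult_le_compat; unfold b1, b2; lra).
  assert (DE : dE <= 2 * (D * (1 / 20) + (P * Q) * (3 / 5))) by (unfold dE; lra).
  assert (DO : 2 * D <= dO) by (unfold dO; lra).
  assert ((E - O) * dE - (E + O) * dO - a1 * a2 + a1 * b2 + a2 * b1 + b1 * b2 <= 0).
  { clearbody E O a1 a2 b1 b2 dE dO. clear - T1 T2 T3 C1 C2 C3 DE DO HPQ HD. lra. }
  subst E O a1 a2 b1 b2 dE dO. lra.
Qed.

Definition Phi_partial (x y : R) (N : nat) : R :=
  Phi (theta_even_partial x N) (theta_odd_partial x N)
      (theta_even_partial y N) (theta_odd_partial y N).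

Lemma Phi_partial_cv x y : 0 <= x < 1 -> 0 <= y < 1 -> Un_cv (Phi_partial x y) (Fq x y).
Proof.
  intros Hx Hy. unfold Phi_partial, Fq, Phi.
  assert (A1 := theta_even_partial_cv x Hx). assert (A2 := theta_odd_partial_cv x Hx).
  assert (A3 := theta_even_partial_cv y Hy). assert (A4 := theta_odd_partial_cv y Hy).
  apply CV_minus; [apply CV_mult; apply CV_minus; auto |].
  apply CV_mult; auto. apply CV_mult; auto. apply Un_cv_const.
Qed.

Lemma Phi_partial_le_close x e y N : 0 <= x <= e -> e <= y <= 1 / 6 ->
  0 <= x + y - 2 * e -> (e - x) * (y - e) <= (x + y - 2 * e) / 6 ->
  Phi_partial x y N <= Phi_partial e e N.
Proof.
  intros Hxe Hey HD HPQ. unfold Phi_partial, theta_even_partial, theta_odd_partial.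
  destruct N as [| N]; [unfold pow_sum, Phi; simpl; lra |].
  assert (Hz : forall z, 0 <= z <= y -> 0 <= z <= 1 / 6) by (intros; lra).
  apply (Phi_le_of_difference_bounds _ _ _ _ _ _ (x + y - 2 * e) (e - x) (y - e)).
  - apply pow_sum_sub_le_scaled; [lra | apply pow_sum_d1_even_le; lra].
  - apply pow_sum_sub_le_scaled; [lra | apply pow_sum_d1_even_le; lra].
  - apply pow_sum_sub_le_scaled; [lra | apply pow_sum_d1_odd_le; lra].
  - apply pow_sum_sub_le_scaled; [lra | apply pow_sum_d1_odd_le; lra].
  - apply pow_sum_second_diff_le_scaled; try lra;
      [apply pow_sum_d1_even_le | apply pow_sum_d2_even_bounds]; lra.
  - apply pow_sum_second_diff_ge; try lra; [reflexivity | lia].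
  - split; [apply pow_sum_ge0; lra | apply pow_sum_even_le_odd; lra].
  - lra.
  - lra.
  - lra.
  - lra.
Qed.

Lemma Fq_le_close_nomes x e y : 0 < x <= e -> e <= y <= 1 / 6 ->
  0 <= x + y - 2 * e -> (e - x) * (y - e) <= (x + y - 2 * e) / 6 -> Fq x y <= Fq e e.
Proof.
  intros Hxe Hey HD HPQ.
  apply (Rle_cv_lim (fun N => Phi_partial_le_close x e y N ltac:(lra) Hey HD HPQ));
    apply Phi_partial_cv; lra.
Qed.

(** * Upper bounds for [theta4] in terms of the nome *)

Lemma signed_sq_sum_even_le z N : 0 <= z <= 1 -> signed_sq_sum z (2 * S N) <= - z + z ^ 4.
Proof.
  intros Hz. induction N.
  - rewrite signed_sq_sum_even. unfold pow_sum, even_sq_pred, odd_sq_pred. simpl. lra.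
  - rewrite signed_sq_sum_even in *. unfold pow_sum in *. cbn [sum_lt] in *.
    assert (z ^ S (even_sq_pred (S N)) <= z ^ S (odd_sq_pred (S N)))
      by (apply pow_le_pow_le1; auto; unfold even_sq_pred, odd_sq_pred; lia).
    lra.
Qed.

Lemma theta_diff_le z : 0 < z < 1 -> theta_even z - theta_odd z <= 1 - 2 * z + 2 * z ^ 4.
Proof.
  intros Hz. apply (Un_cv_le _ _ _ (Un_cv_shift _ _ (signed_sq_sum_even_cv z ltac:(lra)))).
  intros n. assert (H := signed_sq_sum_even_le z n ltac:(lra)). lra.
Qed.

Fixpoint alt_sum (g : nat -> R) (j L : nat) : R :=
  match L with O => 0 | S L' => g j - alt_sum g (S j) L' end.

Lemma alt_sum_snoc g L : forall j, alt_sum g j (S L) = alt_sum g j L + (-1) ^ L * g (j + L)%nat.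
Proof.
  induction L; intros j.
  - simpl. rewrite Nat.add_0_r. ring.
  - change (alt_sum g j (S (S L))) with (g j - alt_sum g (S j) (S L)).
    rewrite IHL. change (alt_sum g j (S L)) with (g j - alt_sum g (S j) L).
    replace (S j + L)%nat with (j + S L)%nat by lia. simpl. ring.
Qed.

Section LogConcaveAltSum.
Variable g : nat -> R.
Variable G : R.
Hypothesis g_pos : forall k, 0 < g k.
Hypothesis g_le : forall k, g k <= G.
Hypothesis g_log_concave : forall k, g k * g (S (S k)) <= g (S k) * g (S k).

Lemma log_concave_nonincreasing_from j : g (S j) <= g j -> forall i, g (S (j + i)) <= g (j + i).
Proof.
  intros H i. induction i; [rewrite Nat.add_0_r; auto |].
  replace (S (j + S i)) with (S (S (j + i))) by lia. replace (j + S i)%nat with (S (j + i)) by lia.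
  assert (H1 := g_log_concave (j + i)). assert (H2 := g_pos (j + i)).
  assert (H3 := g_pos (S (j + i))). assert (H4 := g_pos (S (S (j + i)))). nra.
Qed.

Lemma alt_sum_bounds_nonincreasing L : forall j, (forall i, g (S (j + i)) <= g (j + i)) ->
  0 <= alt_sum g j L <= g j.
Proof.
  induction L; intros j Hj; simpl; [assert (H := g_pos j); lra |].
  assert (IH := IHL (S j) ltac:(intros i; replace (S j + i)%nat with (j + S i)%nat by lia; apply Hj)).
  assert (H := Hj 0%nat). rewrite Nat.add_0_r in H. lra.
Qed.

(* A log-concave sequence is unimodal: once it decreases, the alternating tail is
   controlled by its first term; before that, pair the first two terms. *)
Lemma alt_sum_le_log_concave L : forall j, alt_sum g j L <= G.
Proof.
  cut ((forall j, alt_sum g j L <= G) /\ (forall j, alt_sum g j (S L) <= G)); [tauto |].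
  induction L as [| L [IH1 IH2]].
  - split; intros j; simpl.
    + assert (H := g_pos 0%nat). assert (H' := g_le 0%nat). lra.
    + assert (H' := g_le j). lra.
  - split; [exact IH2 |]. intros j.
    change (alt_sum g j (S (S L))) with (g j - alt_sum g (S j) (S L)).
    destruct (Rle_lt_dec (g (S (S j))) (g (S j))) as [Hd | Hi].
    + assert (H := alt_sum_bounds_nonincreasing (S L) (S j)
                     (log_concave_nonincreasing_from (S j) Hd)).
      assert (H' := g_le j). lra.
    + assert (Hgj : g j < g (S j)).
      { destruct (Rle_lt_dec (g (S j)) (g j)) as [Hc | Hc]; auto.
        assert (H := log_concave_nonincreasing_from j Hc 1%nat).
        rewrite Nat.add_1_r in H. lra. }
      change (alt_sum g (S j) (S L)) with (g (S j) - alt_sum g (S (S j)) L).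
      assert (H := IH1 (S (S j))). lra.
Qed.

End LogConcaveAltSum.

Definition sq_gap (y : R) (k : nat) : R := y ^ (k * k) - y ^ (S k * S k).

Lemma signed_sq_sum_alt_sum y L :
  1 + 2 * signed_sq_sum y L = alt_sum (sq_gap y) 0 L + (-1) ^ L * y ^ (L * L).
Proof.
  induction L; [simpl; ring |].
  rewrite alt_sum_snoc. cbn [signed_sq_sum]. simpl (0 + L)%nat.
  replace (1 + 2 * (signed_sq_sum y L + (-1) ^ S L * y ^ (S L * S L)))
    with ((1 + 2 * signed_sq_sum y L) + 2 * (-1) ^ S L * y ^ (S L * S L)) by ring.
  rewrite IHL. unfold sq_gap. simpl ((-1) ^ S L). ring.
Qed.

Lemma sq_gap_succ_eqs y k :
  let f := y ^ (k * k) in let w := y ^ (2 * k + 1) in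
  sq_gap y k = f * (1 - w) /\ sq_gap y (S k) = f * w * (1 - w * (y * y)) /\
  sq_gap y (S (S k)) = f * w * w * (y * y) * (1 - w * (y * y * y * y)).
Proof.
  intros f w.
  assert (E1 : y ^ (S k * S k) = f * w) by (unfold f, w; rewrite <- pow_add; f_equal; nia).
  assert (E2 : y ^ (S (S k) * S (S k)) = f * w * w * y ^ 2).
  { unfold f, w. rewrite <- !pow_add. f_equal. nia. }
  assert (E3 : y ^ (S (S (S k)) * S (S (S k))) = f * w * w * w * y ^ 6).
  { unfold f, w. rewrite <- !pow_add. f_equal. nia. }
  unfold sq_gap. rewrite E1, E2, E3. fold f. simpl (y ^ 2) in *. simpl (y ^ 6) in *. repeat split; ring.
Qed.

Lemma sq_gap_pos y k : 0 < y < 1 -> 0 < sq_gap y k.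
Proof.
  intros Hy. destruct (sq_gap_succ_eqs y k) as [E _]. rewrite E.
  assert (0 < y ^ (k * k)) by (apply pow_lt; lra).
  assert (y ^ (2 * k + 1) < 1) by (apply pow_lt_one; lra || lia). nra.
Qed.

Lemma sq_gap_log_concave_poly (w t : R) : 0 <= w <= 1 -> 0 <= t <= 1 ->
  (1 - w) * (w * w * t - w * w * w * (t * t * t)) <= (w - w * w * t) * (w - w * w * t).
Proof.
  intros Hw Ht.
  assert (E : (w - w * w * t) * (w - w * w * t) - (1 - w) * (w * w * t - w * w * w * (t * t * t)) =
              w * w * ((1 - t) * (1 - w * t - w * t * t + w * w * t * t))) by ring.
  assert (0 <= 1 - w * t - w * t * t + w * w * t * t).
  { assert (0 <= w * (1 - w) * t * (1 - t)) by (repeat apply Rmult_le_pos; lra).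
    assert (0 <= t * (1 - w) * (1 - w)) by (repeat apply Rmult_le_pos; lra). nra. }
  assert (0 <= w * w * ((1 - t) * (1 - w * t - w * t * t + w * w * t * t)))
    by (apply Rmult_le_pos; [nra | apply Rmult_le_pos; lra]).
  lra.
Qed.

Lemma sq_gap_log_concave y k : 0 < y < 1 ->
  sq_gap y k * sq_gap y (S (S k)) <= sq_gap y (S k) * sq_gap y (S k).
Proof.
  intros Hy. destruct (sq_gap_succ_eqs y k) as [E1 [E2 E3]]. rewrite E1, E2, E3.
  set (f := y ^ (k * k)). set (w := y ^ (2 * k + 1)).
  assert (0 <= f) by (apply pow_le; lra).
  assert (Hw : 0 <= w <= 1) by (split; [apply pow_le | apply pow_le_one]; lra).
  assert (Hpoly := sq_gap_log_concave_poly w (y * y) Hw ltac:(nra)).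
  assert (0 <= f * f) by nra.
  replace (f * (1 - w) * (f * w * w * (y * y) * (1 - w * (y * y * y * y))))
    with ((f * f) * ((1 - w) * (w * w * (y * y) - w * w * w * ((y * y) * (y * y) * (y * y))))) by ring.
  replace (f * w * (1 - w * (y * y)) * (f * w * (1 - w * (y * y))))
    with ((f * f) * ((w - w * w * (y * y)) * (w - w * w * (y * y)))) by ring.
  apply Rmult_le_compat_l; auto.
Qed.

(* Bernoulli: [1 - w <= (2 k + 1) d] and [f <= 1 / (1 + k^2 d)] with [d = 1 - y]. *)
Lemma sq_gap_le y k : 4 / 5 <= y < 1 -> sq_gap y k <= 13 / 20.
Proof.
  intros Hy. destruct (sq_gap_succ_eqs y k) as [E _]. rewrite E.
  set (d := 1 - y). assert (Hd : 0 < d <= 1 / 5) by (unfold d; lra).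
  replace y with (1 - d) by (unfold d; ring).
  assert (B1 := pow_one_sub_ge d (2 * k + 1) ltac:(lra)).
  assert (B2 := pow_one_sub_mul_le d (k * k) ltac:(lra)).
  rewrite mult_INR in B2. rewrite plus_INR, mult_INR in B1. simpl (INR 1) in B1. simpl (INR 2) in B1.
  set (K := INR k) in *. assert (HK : 0 <= K) by apply pos_INR.
  set (f := (1 - d) ^ (k * k)) in *. set (w := (1 - d) ^ (2 * k + 1)) in *.
  assert (Hf : 0 <= f) by (apply pow_le; lra).
  assert (Q : (2 * K + 1) * d <= 13 / 20 * (1 + K * K * d)).
  { assert (0 <= d * ((13 / 20 * K - 1) * (13 / 20 * K - 1)))
      by (apply Rmult_le_pos; [lra | apply Rle_0_sqr]).
    lra. }
  assert (f * (1 - w) <= f * ((2 * K + 1) * d)) by (apply Rmult_le_compat_l; lra).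
  assert (f * ((2 * K + 1) * d) <= f * (13 / 20 * (1 + K * K * d))) by (apply Rmult_le_compat_l; lra).
  nra.
Qed.

Lemma theta_diff_le_near_one y : 4 / 5 <= y < 1 -> theta_even y - theta_odd y <= 13 / 20.
Proof.
  intros Hy.
  assert (Hpartial : forall N, 1 + 2 * signed_sq_sum y (2 * N) <= 13 / 20 + y ^ (2 * N * (2 * N))).
  { intros N. rewrite signed_sq_sum_alt_sum, pow_1_even.
    assert (Hy' : 0 < y < 1) by lra.
    assert (H := alt_sum_le_log_concave (sq_gap y) (13 / 20) (fun k => sq_gap_pos y k Hy')
                   (fun k => sq_gap_le y k Hy) (fun k => sq_gap_log_concave y k Hy') (2 * N) 0).
    lra. }
  assert (Htail : Un_cv (fun N => 13 / 20 + y ^ (2 * N * (2 * N))) (13 / 20)).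
  { assert (Hpow : Un_cv (fun N => y ^ (2 * N * (2 * N))) 0).
    { apply (Un_cv_pow_unbounded y (fun N => (2 * N * (2 * N))%nat)); [lra |].
      intros [| M]; [lia | nia]. }
    assert (H := CV_plus _ _ _ _ (Un_cv_const (13 / 20)) Hpow).
    rewrite Rplus_0_r in H. exact H. }
  apply (Rle_cv_lim Hpartial (signed_sq_sum_even_cv y ltac:(lra)) Htail).
Qed.

(** * The two regimes *)

Lemma exp_second_diff_ge (d B : R) : 0 <= d -> 0 <= B <= 1 -> 2 * d <= B * B ->
  3 / 4 * d <= exp (- (d + B)) + exp B - 2.
Proof.
  intros Hd HB HdB.
  assert (exp (- B) - d <= exp (- (d + B))).
  { replace (- (d + B)) with (- d + - B) by ring. rewrite exp_plus.
    assert (1 - d <= exp (- d)) by (replace (1 - d) with (1 + - d) by ring; apply exp_ineq1_le).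
    assert (exp (- B) <= 1) by (rewrite <- exp_0; apply exp_le_compat; lra).
    assert (0 < exp (- B)) by apply exp_pos. nra. }
  assert (Hcosh := exp_add_exp_opp_ge B HB). lra.
Qed.

(* The nomes [e^-alpha], [e^-rho], [e^-beta] with [alpha = rho + d + B], [beta = rho - B]. *)
Lemma Fq_le_close (e d B : R) : 0 < e <= 1 / 18 -> 0 <= d -> 0 <= B <= 1 -> 2 * d <= B * B ->
  Fq (e * exp (- (d + B))) (e * exp B) <= Fq e e.
Proof.
  intros He Hd HB HdB.
  set (x := e * exp (- (d + B))). set (y := e * exp B).
  assert (Hx : 0 < x <= e).
  { unfold x. assert (0 < exp (- (d + B)) <= 1).
    { split; [apply exp_pos | rewrite <- exp_0; apply exp_le_compat; lra]. } nra. }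
  assert (Hy : e <= y <= 1 / 6).
  { unfold y. assert (1 <= exp B) by (rewrite <- exp_0; apply exp_le_compat; lra).
    assert (exp B <= 3) by (apply Rle_trans with (exp 1); [apply exp_le_compat; lra | apply exp_le_3]).
    nra. }
  assert (Hsd : 3 / 4 * e * d <= x + y - 2 * e).
  { assert (Hsd := exp_second_diff_ge d B Hd HB HdB). unfold x, y. nra. }
  assert (Hxy : x * y = e * e * exp (- d)).
  { unfold x, y. replace (- d) with (- (d + B) + B) by ring. rewrite exp_plus. ring. }
  assert (1 - exp (- d) <= d) by (assert (1 + - d <= exp (- d)) by apply exp_ineq1_le; lra).
  apply Fq_le_close_nomes; [lra | lra | nra |].
  replace ((e - x) * (y - e)) with (e * (x + y - 2 * e) + (e * e - x * y)) by ring.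
  rewrite Hxy. replace (e * e - e * e * exp (- d)) with (e * e * (1 - exp (- d))) by ring.
  assert (e * e * (1 - exp (- d)) <= e * e * d) by (apply Rmult_le_compat_l; nra).
  assert (e * (e * d) <= e * (4 / 3 * (x + y - 2 * e))) by (apply Rmult_le_compat_l; lra).
  assert (e * (x + y - 2 * e) <= 1 / 18 * (x + y - 2 * e)) by (apply Rmult_le_compat_r; nra).
  nra.
Qed.

Lemma inv_one_sub_pow8_le z : 0 <= z <= 1 / 18 -> / (1 - z ^ 8) <= 1001 / 1000.
Proof.
  intros Hz. assert (z ^ 8 <= (1 / 18) ^ 8) by (apply pow_incr; lra).
  assert (0 <= z ^ 8) by (apply pow_le; lra).
  assert ((1 / 18) ^ 8 <= 1 / 10000) by (simpl; lra).
  replace (1001 / 1000) with (/ (1000 / 1001)) by field.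
  apply Rinv_le_contravar; lra.
Qed.

Lemma theta_even_le_small z : 0 <= z <= 1 / 18 -> theta_even z <= 1 + 3 * z ^ 4.
Proof.
  intros Hz. destruct (theta_even_bounds z ltac:(lra)) as [_ H].
  assert (0 <= z ^ 4) by (apply pow_le; lra).
  assert (z ^ 4 * / (1 - z ^ 8) <= z ^ 4 * (1001 / 1000))
    by (apply Rmult_le_compat_l; [| apply inv_one_sub_pow8_le]; lra).
  lra.
Qed.

Lemma theta_odd_le_small z : 0 <= z <= 1 / 18 -> theta_odd z <= 2 * z * (1001 / 1000).
Proof.
  intros Hz. destruct (theta_odd_bounds z ltac:(lra)) as [_ H].
  assert (z * / (1 - z ^ 8) <= z * (1001 / 1000))
    by (apply Rmult_le_compat_l; [| apply inv_one_sub_pow8_le]; lra).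
  lra.
Qed.

Lemma Fq_diag_ge e : 0 < e <= 1 / 18 ->
  let c := 2 * e * (1001 / 1000) in 1 - 2 * c - c * c <= Fq e e.
Proof.
  intros He c. unfold Fq, Phi.
  destruct (theta_even_bounds e ltac:(lra)) as [HE _].
  destruct (theta_odd_bounds e ltac:(lra)) as [HO _].
  assert (theta_odd e <= c) by (apply theta_odd_le_small; lra).
  assert (1 - theta_odd e <= theta_even e - theta_odd e) by lra.
  assert (0 <= 1 - theta_odd e) by (unfold c in *; lra). nra.
Qed.

Lemma Fq_le_theta_even_mul x y : 0 <= x < 1 -> 0 <= y < 1 ->
  Fq x y <= theta_even x * (theta_even y - theta_odd y).
Proof.
  intros Hx Hy. unfold Fq, Phi.
  destruct (theta_odd_bounds x Hx) as [Ox _]. destruct (theta_odd_bounds y Hy) as [Oy _].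
  destruct (theta_even_bounds y Hy) as [Ey _].
  assert (0 <= theta_odd x * (theta_even y + theta_odd y)) by (apply Rmult_le_pos; lra). nra.
Qed.

(* Three ranges of [y]: [theta4] is at most [1 - 2 y + 2 y^4], which is at most [61/100]
   on [[1/5, 4/5]], and at most [13/20] beyond. *)
Lemma theta_diff_far_le (a e y : R) : 0 < e <= 1 / 18 -> 5 / 2 * e <= y < 1 ->
  1 <= a <= 1 + 3 * e ^ 4 ->
  let c := 2 * e * (1001 / 1000) in a * (theta_even y - theta_odd y) <= 1 - 2 * c - c * c.
Proof.
  intros He Hy Ha c. unfold c. set (t := theta_even y - theta_odd y).
  assert (He4 : 0 <= e ^ 4 <= 1 / 18 * e).
  { split; [apply pow_le; lra |].
    assert (e * e * e <= 1 / 18) by (assert (e * e <= 1) by nra; nra). simpl. nra. }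
  destruct (Rle_lt_dec t 0) as [Ht | Ht].
  { assert (a * t <= 0) by nra. nra. }
  apply Rle_trans with ((1 + 3 * e ^ 4) * t); [apply Rmult_le_compat_r; lra |].
  destruct (Rle_lt_dec y (1 / 5)) as [Y1 | Y1]; [| destruct (Rle_lt_dec y (4 / 5)) as [Y2 | Y2]].
  - assert (H := theta_diff_le y ltac:(lra)).
    assert (y ^ 4 <= y * (1 / 125)).
    { replace (y ^ 4) with (y * (y * y * y)) by ring. apply Rmult_le_compat_l; [lra |].
      assert (y * y <= 1 / 25) by nra. nra. }
    assert (t <= 1 - 496 / 100 * e) by (unfold t; lra). nra.
  - assert (H := theta_diff_le y ltac:(lra)).
    assert (y ^ 4 <= 16 / 10000 + 68 / 100 * (y - 1 / 5)).
    { assert ((y - 1 / 5) * (y - 4 / 5) * (y * y + y + 84 / 100) <= 0).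
      { assert (0 <= y * y + y + 84 / 100) by nra. assert ((y - 1 / 5) * (y - 4 / 5) <= 0) by nra. nra. }
      simpl. nra. }
    assert (t <= 61 / 100) by (unfold t; lra). nra.
  - assert (t <= 13 / 20) by (apply theta_diff_le_near_one; lra). nra.
Qed.

Lemma Fq_le_far x e y : 0 < x <= e -> e <= 1 / 18 -> 5 / 2 * e <= y < 1 -> Fq x y <= Fq e e.
Proof.
  intros Hx He Hy.
  assert (x ^ 4 <= e ^ 4) by (apply pow_incr; lra).
  assert (Ha : 1 <= theta_even x <= 1 + 3 * e ^ 4).
  { split; [apply theta_even_bounds; lra |].
    assert (theta_even x <= 1 + 3 * x ^ 4) by (apply theta_even_le_small; lra). lra. }
  assert (H1 := Fq_le_theta_even_mul x y ltac:(lra) ltac:(lra)).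
  assert (H2 := theta_diff_far_le (theta_even x) e y ltac:(lra) Hy Ha).
  assert (H3 := Fq_diag_ge e ltac:(lra)).
  simpl in H2, H3. lra.
Qed.

Lemma nome_le_1_18 r : 1 <= r -> nome r <= 1 / 18.
Proof.
  intros Hr. unfold nome. rewrite Ropp_mult_distr_l_reverse, exp_Ropp.
  assert (3 < PI) by (assert (H := PI2_3_2); lra).
  assert (exp 3 <= exp (PI * r)) by (apply exp_le_compat; nra).
  assert (H18 := exp_3_ge). replace (1 / 18) with (/ 18) by field. apply Rinv_le_contravar; lra.
Qed.

(* With [rho = PI r], [beta = PI r / s = rho - B] and [d = alpha + beta - 2 rho] where
   [alpha = PI r s = rho^2 / beta], one has [d * beta = B^2]. *)
Lemma Fr_le_Fr_1_ge1 r s : 1 <= r -> 1 <= s -> Fr r s <= Fr r 1.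
Proof.
  intros Hr Hs. rewrite !Fr_nome by lra.
  replace (r * 1) with r by ring. replace (r / 1) with r by field.
  assert (HPI : 3 < PI) by (assert (H := PI2_3_2); lra).
  set (e := nome r).
  assert (He : 0 < e <= 1 / 18) by (split; [apply nome_bounds; lra | apply nome_le_1_18; lra]).
  set (B := PI * r - PI * (r / s)). set (d := PI * (r * s) + PI * (r / s) - 2 * (PI * r)).
  assert (Hy : nome (r / s) = e * exp B).
  { unfold e, nome, B. rewrite <- exp_plus. f_equal. ring. }
  assert (Hx : nome (r * s) = e * exp (- (d + B))).
  { unfold e, nome, d, B. rewrite <- exp_plus. f_equal. ring. }
  assert (HB0 : 0 <= B).
  { unfold B. assert (r / s <= r) by (apply Rmult_le_reg_r with s; [lra | field_simplify; nra; lra]).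
    nra. }
  destruct (Rle_lt_dec B 1) as [HB1 | HB1].
  - assert (Hbeta : 2 <= PI * (r / s)) by (unfold B in HB1; nra).
    assert (Hdbeta : d * (PI * (r / s)) = B * B) by (unfold d, B; field; lra).
    assert (Hd : 0 <= d).
    { replace d with (B * B / (PI * (r / s))) by (rewrite <- Hdbeta; field; lra).
      unfold Rdiv. apply Rmult_le_pos; [nra | left; apply Rinv_0_lt_compat; lra]. }
    assert (0 <= d * (PI * (r / s) - 2)) by (apply Rmult_le_pos; lra).
    rewrite Hx, Hy. apply Fq_le_close; lra.
  - assert (Hexp : 5 / 2 <= exp B)
      by (apply Rle_trans with (exp 1); [apply exp_1_ge | apply exp_le_compat; lra]).
    assert (Hxe : nome (r * s) <= e).
    { unfold e, nome. apply exp_le_compat.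
      assert (PI * r <= PI * (r * s)) by (apply Rmult_le_compat_l; nra). lra. }
    apply Fq_le_far; [split; [apply nome_bounds; nra | exact Hxe] | lra |].
    split; [rewrite Hy; nra | apply nome_bounds, Rdiv_lt_0_compat; lra].
Qed.

Lemma Fr_inv r s : 0 < s -> Fr r (/ s) = Fr r s.
Proof.
  intros Hs. unfold Fr.
  replace (r * / s) with (r / s) by (unfold Rdiv; ring).
  replace (r / / s) with (r * s) by (field; lra). ring.
Qed.

Theorem theorem6 (r : R) (hr : 1 <= r) :
  forall s : R, 0 < s -> Fr r s <= Fr r 1.
Proof.
  intros s Hs. destruct (Rle_lt_dec 1 s) as [H | H].
  - apply Fr_le_Fr_1_ge1; auto.
  - rewrite <- (Fr_inv r s Hs). apply Fr_le_Fr_1_ge1; auto.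
    rewrite <- Rinv_1. apply Rinv_le_contravar; lra.
Qed.
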